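(* For either choice $\zeta\in\{q,-q^3\}$, the function $\bar{\mathcal{F}}(v_1,v_2\mid\lambda_1,\dots,\lambda_{L-1})=\langle\bar0|\mathcal{B}(v_2)\mathcal{B}(v_1)\mathcal{E}(\lambda_{L-1})\cdots\mathcal{E}(\lambda_1)|0\rangle$ can be written as $\bar{\mathcal{F}}(v_1,v_2\mid\lambda_1,\dots,\lambda_{L-1})=\bar\omega(y_2)\,\bar{\mathcal{H}}(v_1,v_2\mid\lambda_1,\dots,\lambda_{L-1})$ with $y_2=e^{2v_2}$, $\bar\omega(y)=\prod_{j=1}^L(y-e^{2\mu_j})$, where $\bar{\mathcal{H}}$ is a polynomial of degree $L-1$ in the variable $y_2$.
   Context: Let $q\in\mathbb{C}\setminus\{0\}$ (with a fixed choice of $q^{1/2}$) and $\zeta\in\{q,-q^3\}$ ($\zeta=q$: Fateev–Zamolodchikov model; $\zeta=-q^3$: Izergin–Korepin model). For $\lambda\in\mathbb{C}$ put $x=e^{2\lambda}$ and define $a(\lambda)=(x-\zeta)(x-q^2)$, $b(\lambda)=q(x-1)(x-\zeta)$, $c(\lambda)=(1-q^2)(x-\zeta)$, $\bar c(\lambda)=x(1-q^2)(x-\zeta)$, and for $\alpha,\beta\in\{1,2,3\}$, with $\beta'=4-\beta$: $d_{\alpha,\beta}(\lambda)=q(x-1)(x-\zeta)+x(q^2-1)(\zeta-1)$ if $\alpha=\beta=2$; $d_{\alpha,\beta}(\lambda)=(x-1)[(x-\zeta)+x(q^2-1)]$ if $\alpha=\beta\neq 2$; $d_{\alpha,\beta}(\lambda)=(q^2-1)[\zeta(x-1)q^{(\alpha-\beta)/2}-\delta_{\alpha,\beta'}(x-\zeta)]$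 if $\alpha<\beta$; $d_{\alpha,\beta}(\lambda)=x(q^2-1)[(x-1)q^{(\alpha-\beta)/2}-\delta_{\alpha,\beta'}(x-\zeta)]$ if $\alpha>\beta$. Let $e_1,e_2,e_3$ be the standard basis of $\mathbb{C}^3$ and $E_{\alpha,\beta}$ the unit matrices. Define $\mathcal{R}(\lambda)\in\mathrm{End}(\mathbb{C}^3\otimes\mathbb{C}^3)$ as the $9\times 9$ matrix in the ordered basis $e_1\otimes e_1,e_1\otimes e_2,e_1\otimes e_3,e_2\otimes e_1,e_2\otimes e_2,e_2\otimes e_3,e_3\otimes e_1,e_3\otimes e_2,e_3\otimes e_3$ (indices $1,\dots,9$) whose only nonzero entries (row, column) are: $(1,1)=a$; $(2,2)=b$, $(2,4)=c$; $(3,3)=d_{1,1}$, $(3,5)=d_{1,2}$, $(3,7)=d_{1,3}$; $(4,2)=\bar c$, $(4,4)=b$; $(5,3)=d_{2,1}$, $(5,5)=d_{2,2}$, $(5,7)=d_{2,3}$; $(6,6)=b$, $(6,8)=c$; $(7,3)=d_{3,1}$, $(7,5)=d_{3,2}$, $(7,7)=d_{3,3}$; $(8,6)=\bar c$, $(8,8)=b$; $(9,9)=a$ (all evaluated at $\lambda$). Fix $L\ge1$ and inhomogeneities $\mu_1,\dots,\mu_L\in\mathbb{C}$. With $V_a=V_1=\dots=V_L=\mathbb{C}^3$, let $\mathcal{T}(\lambda)=\mathcal{R}_{a1}(\lambda-\mu_1)\cdots\mathcal{R}_{aL}(\lambda-\mu_L)$, where $\mathcal{R}_{aj}$ acts as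 $\mathcal{R}$ on $V_a\otimes V_j$. Write $\mathcal{T}(\lambda)=\sum_{\alpha,\beta}E_{\alpha,\beta}\otimes\mathcal{T}_\alpha^\beta(\lambda)$ and set $\mathcal{B}(\lambda)=\mathcal{T}_1^2(\lambda)$, $\mathcal{E}(\lambda)=\mathcal{T}_1^3(\lambda)$, operators on $V_1\otimes\cdots\otimes V_L$. Let $|0\rangle=e_1^{\otimes L}$ and let $\langle\bar0|$ be the dual vector of $e_3^{\otimes L}$. *)

From HB Require Import structures.
From mathcomp Require Import all_boot all_order all_algebra.
From mathcomp Require Import complex.
From mathcomp Require Import reals sequences exp trigo.
Set Implicit Arguments. Unset Strict Implicit. Unset Printing Implicit Defensive.
Import Order.TTheory GRing.Theory Num.Theory.
Local Open Scope ring_scope.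

Definition cexp (R : realType) (z : R[i]) : R[i] :=
  Complex (expR (complex.Re z) * cos (complex.Im z))
          (expR (complex.Re z) * sin (complex.Im z)).

Section Model.
Variable R : realType.
Local Notation C := (R[i]).
(* q, a fixed square root s = q^{1/2} of q, and zeta *)
Variables (q s zeta : C).

(* the weights d_{alpha,beta}(x), alpha beta in {1,2,3};
   q^{(alpha-beta)/2} = s^(alpha-beta) (integer power) *)
Definition dw (x : C) (al be : nat) : C :=
  if (al == 2%N) && (be == 2%N) then
    q * (x - 1) * (x - zeta) + x * (q ^+ 2 - 1) * (zeta - 1)
  else if al == be then
    (x - 1) * ((x - zeta) + x * (q ^+ 2 - 1))
  else if (al < be)%N then
    (q ^+ 2 - 1) * (zeta * (x - 1) * s ^ (al%:Z - be%:Z)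
                    - (if al == (4 - be)%N then 1 else 0) * (x - zeta))
  else
    x * (q ^+ 2 - 1) * ((x - 1) * s ^ (al%:Z - be%:Z)
                    - (if al == (4 - be)%N then 1 else 0) * (x - zeta)).

Definition aw (x : C) : C := (x - zeta) * (x - q ^+ 2).
Definition bw (x : C) : C := q * (x - 1) * (x - zeta).
Definition cw (x : C) : C := (1 - q ^+ 2) * (x - zeta).
Definition cbw (x : C) : C := x * (1 - q ^+ 2) * (x - zeta).

Definition Rmat (x : C) (r c : nat) : C :=
  match r, c with
  | 1, 1 => aw x
  | 2, 2 => bw x | 2, 4 => cw x
  | 3, 3 => dw x 1 1 | 3, 5 => dw x 1 2 | 3, 7 => dw x 1 3
  | 4, 2 => cbw x | 4, 4 => bw x
  | 5, 3 => dw x 2 1 | 5, 5 => dw x 2 2 | 5, 7 => dw x 2 3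
  | 6, 6 => bw x | 6, 8 => cw x
  | 7, 3 => dw x 3 1 | 7, 5 => dw x 3 2 | 7, 7 => dw x 3 3
  | 8, 6 => cbw x | 8, 8 => bw x
  | 9, 9 => aw x
  | _, _ => 0%R
  end%N.

(* R(lambda) as an operator on V_a (x) V_j: matrix element
   <e_a (x) e_i | R | e_b (x) e_j>, with a,i,b,j in 'I_3 standing for 1,2,3;
   basis index of e_a (x) e_i is 3a + i + 1. *)
Definition Rent (lam : C) (a i b j : 'I_3) : C :=
  Rmat (cexp (2%:R * lam)) (3 * a + i + 1) (3 * b + j + 1).

(* Matrix elements of the monodromy T(lambda) = R_{a1}(lambda-mu_1)...R_{aL}(lambda-mu_L):
   mono mus lam al be ii jj = <e_al (x) e_ii | T | e_be (x) e_jj>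
   (the quantum-space part being the operator T_al^be). *)
Fixpoint mono (mus : seq C) (lam : C) (al be : 'I_3) (ii jj : seq 'I_3) : C :=
  match mus, ii, jj with
  | [::], [::], [::] => if al == be then 1 else 0
  | mu :: mus', i :: ii', j :: jj' =>
      \sum_(k < 3) Rent (lam - mu) al i k j * mono mus' lam k be ii' jj'
  | _, _, _ => 0
  end.

Variable L : nat.
Variable mu : 'I_L -> C.
Definition mus : seq C := [seq mu j | j <- enum 'I_L].

Definition state := (L.-tuple 'I_3)%type.
Definition vec := state -> C.
Definition op := state -> state -> C.

Definition Top (al be : 'I_3) (lam : C) : op :=
  fun st st' => mono mus lam al be st st'.
Definition Bop (lam : C) : op := Top 0 1 lam.
Definition Eop (lam : C) : op := Top 0 2 lam.

Definition apply (A : op) (v : vec) : vec := fun st => \sum_(st' : state) A st st' * v st'.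

(* |0> = e_1^{(x) L} ; <0bar| = dual of e_3^{(x) L} *)
Definition vac : vec := fun st => if st == [tuple of nseq L (0 : 'I_3)] then 1 else 0.
Definition dualvac (v : vec) : C := v [tuple of nseq L (2 : 'I_3)].

Definition Fbar (v1 v2 : C) (lam : 'I_L.-1 -> C) : C :=
  dualvac (apply (Bop v2) (apply (Bop v1)
    (foldl (fun v l => apply (Eop l) v) vac [seq lam j | j <- enum 'I_L.-1]))).

Definition omegabar : {poly C} := \prod_(j < L) ('X - (cexp (2%:R * mu j))%:P).

End Model.

From HB Require Import structures.
From mathcomp Require Import all_boot all_order all_algebra.
From mathcomp Require Import complex.
From mathcomp Require Import reals sequences exp trigo.
From mathcomp Require Import ring.
Import Order.TTheory GRing.Theory Num.Theory.
Local Open Scope ring_scope.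
Set Implicit Arguments. Unset Strict Implicit.

(** Only the row [<e_3^{(x) L}|] of [B(v)] matters.  In the row [e_3 (x) e_3]
   of [R] the only entry is [a], which keeps the auxiliary index at [3], so the
   entries of [T_3^2] along that row vanish; hence the auxiliary index of
   [T_1^2] goes from [1] to [2] at exactly one site, through [d_{1,2}], and
   uses [d_{1,1}] before and [b] after that site.  With [y = e^{2v}] and
   [c_j = e^{2mu_j}], each of [d_{1,1}(y/c_j)], [d_{1,2}(y/c_j)], [b(y/c_j)] is
   divisible by [y - c_j], with a linear cofactor for [d_{1,1}] and [b] and a
   constant one for [d_{1,2}]; so every matrix element of that row is
   [omega(y)] times a polynomial of degree at most [L - 1]. *)

Section ComplexExp.
Variable R : realType.
Local Notation C := (R[i]).

Lemma cexpD (a b : C) : cexp (a + b) = cexp a * cexp b.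
Proof.
case: a => a1 a2; case: b => b1 b2; rewrite /cexp /=.
by congr Complex; rewrite ?expRD ?cosD ?sinD; ring.
Qed.

Lemma cexp0 : cexp (0 : C) = 1.
Proof. by rewrite /cexp /= expR0 cos0 sin0 mulr1 mulr0. Qed.

Lemma cexp_neq0 (a : C) : cexp a != 0.
Proof.
apply/eqP => ea0; have := cexpD a (- a).
by rewrite subrr cexp0 ea0 mul0r => /eqP; rewrite oner_eq0.
Qed.

Lemma cexpB (a b : C) : cexp (a - b) = cexp a / cexp b.
Proof. by rewrite -[in cexp a](subrK b a) (cexpD (a - b)) mulfK ?cexp_neq0. Qed.

End ComplexExp.

Section OmegaMultiple.
Variable R : realType.
Local Notation C := (R[i]).
Local Notation e2 lam := (cexp (2%:R * lam)).

Lemma e2B (lam m : C) : e2 (lam - m) = e2 lam / e2 m.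
Proof. by rewrite mulrBr cexpB. Qed.

Definition omega_poly (ms : seq C) : {poly C} := \prod_(m <- ms) ('X - (e2 m)%:P).

Definition omega_multiple (ms : seq C) (n : nat) (f : C -> C) :=
  exists2 p : {poly C}, (size p <= n)%N &
    forall lam, f lam = (omega_poly ms).[e2 lam] * p.[e2 lam].

Lemma eq_omega_multiple ms n f g :
  f =1 g -> omega_multiple ms n f -> omega_multiple ms n g.
Proof. by move=> efg [p szp Ep]; exists p => // lam; rewrite -efg. Qed.

Lemma omega_multiple0 ms n : omega_multiple ms n (fun _ => 0).
Proof. by exists 0 => [|lam]; rewrite ?size_poly0 // horner0 mulr0. Qed.

Lemma omega_multipleD ms n f g :
  omega_multiple ms n f -> omega_multiple ms n g ->
  omega_multiple ms n (fun lam => f lam + g lam).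
Proof.
move=> [p szp Ep] [r szr Er]; exists (p + r) => [|lam].
  by apply: leq_trans (size_polyD _ _) _; rewrite geq_max szp.
by rewrite Ep Er hornerD mulrDr.
Qed.

Lemma omega_multipleMr ms n f c :
  omega_multiple ms n f -> omega_multiple ms n (fun lam => f lam * c).
Proof.
move=> [p szp Ep]; exists (c *: p) => [|lam].
  exact: leq_trans (size_scale_leq _ _) szp.
by rewrite Ep hornerZ mulrCA mulrC.
Qed.

Lemma omega_multiple_sum (I : Type) (r : seq I) ms n (F : I -> C -> C) :
  (forall i, omega_multiple ms n (F i)) ->
  omega_multiple ms n (fun lam => \sum_(i <- r) F i lam).
Proof.
move=> mulF; elim: r => [|i r IH].
  by apply: eq_omega_multiple (omega_multiple0 _ _) => lam; rewrite big_nil.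
by apply: eq_omega_multiple (omega_multipleD (mulF i) IH) => lam; rewrite big_cons.
Qed.

Lemma omega_multiple_cons m ms n k f (r : {poly C}) :
  omega_multiple ms n f -> (size r <= k)%N ->
  omega_multiple (m :: ms) (k + n).-1
    (fun lam => (e2 lam - e2 m) * r.[e2 lam] * f lam).
Proof.
move=> [p szp Ep] szr; exists (r * p) => [|lam].
  apply: leq_trans (size_polyMleq _ _) _.
  by rewrite -!subn1 leq_sub2r // leq_add.
rewrite Ep /omega_poly big_cons !hornerM hornerXsubC; ring.
Qed.

Lemma size_affine_poly (a b : C) : (size (a%:P * 'X + b%:P)%R <= 2)%N.
Proof. by rewrite size_MXaddC; case: ifP => // _; rewrite ltnS size_polyC_leq1. Qed.

End OmegaMultiple.

Section RowE3.
Variable R : realType.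
Local Notation C := (R[i]).
Local Notation e2 lam := (cexp (2%:R * lam)).
Variables (q s zeta : C).
Local Notation T := (mono q s zeta).

Lemma bw_div (x c : C) : c != 0 ->
  bw q zeta (x / c) = (x - c) * (q / c ^+ 2 * x + - (q * zeta / c)).
Proof. by move=> c0; rewrite /bw; field. Qed.

Lemma dw11_div (x c : C) : c != 0 ->
  dw q s zeta (x / c) 1 1 = (x - c) * (q ^+ 2 / c ^+ 2 * x + - (zeta / c)).
Proof. by move=> c0; rewrite /dw /=; field. Qed.

Lemma dw12_div (x c : C) : c != 0 ->
  dw q s zeta (x / c) 1 2 = (x - c) * ((q ^+ 2 - 1) * zeta * s ^ (1%:Z - 2%:Z) / c).
Proof. by move=> c0; rewrite /dw /=; set t := s ^ _; field. Qed.

Lemma sum_ord3 (F : 'I_3 -> C) : \sum_(k < 3) F k = F 0 + F 1 + F 2.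
Proof.
rewrite !big_ord_recl big_ord0 addr0 addrA.
by congr (F _ + F _ + F _); apply/val_inj.
Qed.

(* Rows are named by the paper's indices 1, 2, 3, i.e. the ordinals 0, 1, 2. *)
Lemma mono_row3_eq0 ms lam be jj :
  be != 2 -> T ms lam 2 be (nseq (size ms) 2) jj = 0.
Proof.
move=> be2; elim: ms jj => [|m ms IH] [|j jj] //=; first by rewrite eq_sym (negPf be2).
rewrite sum_ord3 /Rent /= IH.
by case: j => [[|[|[|j]]] Hj] //=; rewrite !mul0r ?mulr0 !addr0.
Qed.

Lemma mono_row2_cons m ms lam j jj :
  T (m :: ms) lam 1 1 (nseq (size ms).+1 2) (j :: jj) =
  if j == 2 then bw q zeta (e2 lam / e2 m) * T ms lam 1 1 (nseq (size ms) 2) jj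
  else 0.
Proof.
rewrite /= sum_ord3 /Rent /= mono_row3_eq0 // e2B.
by case: j => [[|[|[|j]]] Hj] //=; rewrite !mul0r ?mulr0 ?add0r ?addr0.
Qed.

Lemma mono_row1_cons m ms lam j jj :
  T (m :: ms) lam 0 1 (nseq (size ms).+1 2) (j :: jj) =
  if j == 2 then dw q s zeta (e2 lam / e2 m) 1 1 * T ms lam 0 1 (nseq (size ms) 2) jj
  else if j == 1 then dw q s zeta (e2 lam / e2 m) 1 2 * T ms lam 1 1 (nseq (size ms) 2) jj
  else 0.
Proof.
rewrite /= sum_ord3 /Rent /= mono_row3_eq0 // e2B.
by case: j => [[|[|[|j]]] Hj] //=; rewrite !mul0r ?mulr0 ?add0r ?addr0.
Qed.

Lemma omega_multiple_row2 ms jj :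
  omega_multiple ms (size ms).+1 (fun lam => T ms lam 1 1 (nseq (size ms) 2) jj).
Proof.
elim: ms jj => [|m ms IH] [|j jj].
- by exists 1 => [|lam]; rewrite ?size_poly1 // /omega_poly big_nil !hornerC mulr1.
- exact: eq_omega_multiple (omega_multiple0 _ _).
- exact: eq_omega_multiple (omega_multiple0 _ _).
have em := cexp_neq0 (2%:R * m).
have [j2|j2] := eqVneq j 2; last first.
  by apply: eq_omega_multiple (omega_multiple0 _ _) => lam; rewrite mono_row2_cons (negPf j2).
apply: eq_omega_multiple (omega_multiple_cons m (IH jj)
  (size_affine_poly (q / e2 m ^+ 2) (- (q * zeta / e2 m)))) => lam.
by rewrite mono_row2_cons j2 eqxx bw_div // hornerMXaddC !hornerC.
Qed.

Lemma omega_multiple_row1 ms jj :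
  omega_multiple ms (size ms) (fun lam => T ms lam 0 1 (nseq (size ms) 2) jj).
Proof.
elim: ms jj => [|m ms IH] [|j jj]; try exact: eq_omega_multiple (omega_multiple0 _ _).
have em := cexp_neq0 (2%:R * m).
have [j2|j2] := eqVneq j 2.
  apply: eq_omega_multiple (omega_multiple_cons m (IH jj)
    (size_affine_poly (q ^+ 2 / e2 m ^+ 2) (- (zeta / e2 m)))) => lam.
  by rewrite mono_row1_cons j2 eqxx dw11_div // hornerMXaddC !hornerC.
have [j1|j1] := eqVneq j 1.
  apply: eq_omega_multiple (omega_multiple_cons m (omega_multiple_row2 ms jj)
    (size_polyC_leq1 ((q ^+ 2 - 1) * zeta * s ^ (1%:Z - 2%:Z) / e2 m))) => lam.
  by rewrite mono_row1_cons (negPf j2) j1 eqxx dw12_div // hornerC.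
by apply: eq_omega_multiple (omega_multiple0 _ _) => lam; rewrite mono_row1_cons (negPf j2) (negPf j1).
Qed.

Variables (L : nat) (mu : 'I_L -> C).

Lemma size_mus : size (mus mu) = L.
Proof. by rewrite size_map size_enum_ord. Qed.

Lemma omega_poly_mus : omega_poly (mus mu) = omegabar mu.
Proof.
by rewrite /omega_poly /omegabar /mus big_map big_enum.
Qed.

Lemma omega_multiple_dualvac_B (v : vec R L) :
  omega_multiple (mus mu) L (fun v2 => dualvac (apply (Bop q s zeta mu v2) v)).
Proof.
apply: omega_multiple_sum => st; apply: omega_multipleMr.
by have := omega_multiple_row1 (mus mu) st; rewrite size_mus.
Qed.

End RowE3.

Unset Implicit Arguments. Set Strict Implicit.

Theorem corollary2p6 (R : realType) (q s zeta : R[i]) (L : nat)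
    (mu : 'I_L -> R[i]) (v1 : R[i]) (lam : 'I_L.-1 -> R[i]) :
  q != 0 -> s ^+ 2 = q -> (zeta = q \/ zeta = - q ^+ 3) -> (1 <= L)%N ->
  exists H : {poly R[i]},
    (size H <= L)%N /\
    forall v2 : R[i],
      Fbar q s zeta mu v1 v2 lam
      = (omegabar mu).[cexp (2%:R * v2)] * H.[cexp (2%:R * v2)].
Proof.
(* The factorization holds for all parameters. *)
move=> _ _ _ _.
have [H szH EH] := omega_multiple_dualvac_B q s zeta mu
  (apply (Bop q s zeta mu v1)
     (foldl (fun v l => apply (Eop q s zeta mu l) v) (@vac R L) [seq lam j | j <- enum 'I_L.-1])).
by exists H; split=> // v2; rewrite -omega_poly_mus; apply: EH.
Qed.
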